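(* Let $D\in(0,2)$ and let $\gamma$ satisfy $0<\gamma<2-D$. Let $u_1,u_2,\dots,u_j\in[0,1]$ be arbitrary. Define the SF-OGD sequence $\epsilon_1,\epsilon_2,\dots$ as follows: $\epsilon_1\in[-D-\gamma,\,D+\gamma]$, and for $\tau\ge 1$, with $E_\tau=D\cdot\mathrm{sign}(u_\tau-0.5)$, $$g_\tau=\nabla_\epsilon L(E_\tau,\epsilon_\tau)=-\begin{cases}0 & \text{if } E_\tau\epsilon_\tau>0 \text{ and } |\epsilon_\tau|>D,\\[2pt] \dfrac{u_\tau-0.5}{1+\epsilon_\tau(u_\tau-0.5)} & \text{otherwise,}\end{cases}$$ $$\epsilon_{\tau+1}=\epsilon_\tau-\gamma\,\frac{g_\tau}{\sqrt{\sum_{t=1}^{\tau} g_t^2}}$$ (the update term being $0$ when $g_\tau=0$). Then $\epsilon_\tau\in[-D-\gamma,\,D+\gamma]$ for all $1\le\tau\le j$.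
   Context: This is the scale-free online gradient descent (SF-OGD) scheme for learning a betting variable $\epsilon_\tau$ in the wealth process $S_\tau=S_{\tau-1}(1+\epsilon_\tau(u_\tau-0.5))$. The gradient $g_\tau$ is the (sub)gradient in $\epsilon$ of the clip-aware loss $L(E_\tau,\epsilon)=-\log(1+E_\tau(u_\tau-0.5))$ if $E_\tau\epsilon>0$ and $|\epsilon|>D$, and $L(E_\tau,\epsilon)=-\log(1+\epsilon(u_\tau-0.5))$ otherwise. *)

From Stdlib Require Import Reals.
Open Scope R_scope.

Definition sgn (x : R) : R :=
  if Rlt_dec 0 x then 1 else if Rlt_dec x 0 then -1 else 0.

Definition Ebet (D ut : R) : R := D * sgn (ut - / 2).

Definition grad (D ut e : R) : R :=
  if Rlt_dec 0 (Ebet D ut * e) then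
    (if Rlt_dec D (Rabs e) then 0 else - ((ut - / 2) / (1 + e * (ut - / 2))))
  else - ((ut - / 2) / (1 + e * (ut - / 2))).

(* sfogd_state D gamma u eps1 n = (eps_{n+1}, sum_{t=1}^{n} g_t^2) *)
Fixpoint sfogd_state (D gamma : R) (u : nat -> R) (eps1 : R) (n : nat) : R * R :=
  match n with
  | O => (eps1, 0)
  | S m =>
      let (e, s) := sfogd_state D gamma u eps1 m in
      let g := grad D (u (S m)) e in
      let s' := s + g ^ 2 in
      (if Req_EM_T g 0 then e else e - gamma * (g / sqrt s'), s')
  end.

(* eps_tau for tau >= 1 (eps 0 is a junk value equal to eps_1) *)
Definition sfogd_eps (D gamma : R) (u : nat -> R) (eps1 : R) (tau : nat) : R :=
  fst (sfogd_state D gamma u eps1 (tau - 1)).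

(* The normalised step g_τ / sqrt(Σ_{t≤τ} g_t²) lies in [-1, 1] and has the sign of g_τ,
   so ε moves by at most γ per round.  Once |ε| > D the gradient either is clipped to 0
   or, the bet E_τ having the opposite sign to ε, has the sign of ε; then ε moves towards
   0 by at most γ.  So [-D-γ, D+γ] is invariant.  The sign of the unclipped gradient is
   that of -(u - 1/2) because the wealth factor 1 + ε(u - 1/2) stays positive, as
   |ε| ≤ D + γ < 2 and |u - 1/2| ≤ 1/2. *)

From Stdlib Require Import Reals Lra Lia.
Open Scope R_scope.

Lemma Ebet_pos (D ut : R) : 0 < ut - / 2 -> Ebet D ut = D.
Proof.
  intro h. unfold Ebet, sgn.
  destruct (Rlt_dec 0 (ut - / 2)); [ring | lra].
Qed.

Lemma Ebet_neg (D ut : R) : ut - / 2 < 0 -> Ebet D ut = - D.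
Proof.
  intro h. unfold Ebet, sgn.
  destruct (Rlt_dec 0 (ut - / 2)); [lra |].
  destruct (Rlt_dec (ut - / 2) 0); [ring | lra].
Qed.

Lemma wealth_factor_pos (ut e : R) :
  0 <= ut <= 1 -> Rabs e < 2 -> 0 < 1 + e * (ut - / 2).
Proof.
  intros hu he.
  assert (hprod : Rabs (e * (ut - / 2)) < 1).
  { rewrite Rabs_mult.
    assert (Rabs (ut - / 2) <= / 2) by (apply Rabs_le; lra).
    pose proof (Rabs_pos e). pose proof (Rabs_pos (ut - / 2)).
    nra. }
  apply Rabs_def2 in hprod. lra.
Qed.

Lemma grad_ge0_above (D ut e : R) :
  0 <= ut <= 1 -> D < e < 2 -> 0 < D -> 0 <= grad D ut e.
Proof.
  intros hu he hD.
  assert (hden : 0 < 1 + e * (ut - / 2)) by (apply wealth_factor_pos; [| apply Rabs_def1]; lra).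
  assert (hunclipped : ut - / 2 <= 0 -> 0 <= - ((ut - / 2) / (1 + e * (ut - / 2)))).
  { intro ha. unfold Rdiv. rewrite Ropp_mult_distr_l.
    apply Rle_mult_inv_pos; lra. }
  unfold grad.
  destruct (Rlt_dec 0 (Ebet D ut * e)) as [hbet | hbet].
  - destruct (Rlt_dec D (Rabs e)) as [_ | hclip]; [lra |].
    exfalso. apply hclip. rewrite Rabs_right; lra.
  - apply hunclipped. destruct (Rle_dec (ut - / 2) 0) as [| ha]; [assumption |].
    apply Rnot_le_lt in ha.
    exfalso. apply hbet. rewrite Ebet_pos by lra. nra.
Qed.

Lemma grad_le0_below (D ut e : R) :
  0 <= ut <= 1 -> -2 < e < - D -> 0 < D -> grad D ut e <= 0.
Proof.
  intros hu he hD.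
  assert (hden : 0 < 1 + e * (ut - / 2)) by (apply wealth_factor_pos; [| apply Rabs_def1]; lra).
  assert (hunclipped : 0 <= ut - / 2 -> - ((ut - / 2) / (1 + e * (ut - / 2))) <= 0).
  { intro ha. enough (0 <= (ut - / 2) / (1 + e * (ut - / 2))) by lra.
    apply Rle_mult_inv_pos; lra. }
  unfold grad.
  destruct (Rlt_dec 0 (Ebet D ut * e)) as [hbet | hbet].
  - destruct (Rlt_dec D (Rabs e)) as [_ | hclip]; [lra |].
    exfalso. apply hclip. rewrite Rabs_left; lra.
  - apply hunclipped. destruct (Rle_dec 0 (ut - / 2)) as [| ha]; [assumption |].
    apply Rnot_le_lt in ha.
    exfalso. apply hbet. rewrite Ebet_neg by lra. nra.
Qed.

Lemma normalized_step_ge0_le1 (g s : R) :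
  0 <= s -> 0 <= g -> 0 <= g / sqrt (s + g ^ 2) <= 1.
Proof.
  intros hs hg.
  destruct (Req_dec g 0) as [-> | hg0].
  { unfold Rdiv. rewrite Rmult_0_l. lra. }
  assert (hsq : g <= sqrt (s + g ^ 2)).
  { rewrite <- (sqrt_pow2 g hg) at 1. apply sqrt_le_1_alt. lra. }
  assert (hr : 0 < sqrt (s + g ^ 2)) by lra.
  split.
  - apply Rle_mult_inv_pos; lra.
  - apply (Rmult_le_reg_r (sqrt (s + g ^ 2))); [exact hr |].
    unfold Rdiv. rewrite Rmult_assoc, Rinv_l, Rmult_1_r, Rmult_1_l by lra. exact hsq.
Qed.

Lemma normalized_step_le0_ge_N1 (g s : R) :
  0 <= s -> g <= 0 -> -1 <= g / sqrt (s + g ^ 2) <= 0.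
Proof.
  intros hs hg.
  replace (g / sqrt (s + g ^ 2)) with (- (- g / sqrt (s + g ^ 2)))
    by (unfold Rdiv; ring).
  replace (g ^ 2) with ((- g) ^ 2) by ring.
  pose proof (normalized_step_ge0_le1 (- g) s hs ltac:(lra)). lra.
Qed.

Lemma sfogd_update_bounded (D gamma ut e s : R) :
  0 < D -> 0 < gamma -> gamma < 2 - D -> 0 <= ut <= 1 -> 0 <= s ->
  - D - gamma <= e <= D + gamma ->
  let g := grad D ut e in
  - D - gamma <= (if Req_EM_T g 0 then e else e - gamma * (g / sqrt (s + g ^ 2)))
    <= D + gamma.
Proof.
  intros hD hg hg2 hu hs he g.
  destruct (Req_EM_T g 0) as [_ | _]; [lra |].
  destruct (Rle_dec e D) as [heD | heD]; [destruct (Rle_dec (- D) e) as [heND | heND] |].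
  - destruct (Rle_dec 0 g) as [hgpos | hgneg].
    + pose proof (normalized_step_ge0_le1 g s hs hgpos). nra.
    + pose proof (normalized_step_le0_ge_N1 g s hs ltac:(lra)). nra.
  - pose proof (grad_le0_below D ut e hu ltac:(lra) ltac:(lra)).
    pose proof (normalized_step_le0_ge_N1 g s hs ltac:(assumption)). nra.
  - pose proof (grad_ge0_above D ut e hu ltac:(lra) ltac:(lra)).
    pose proof (normalized_step_ge0_le1 g s hs ltac:(assumption)). nra.
Qed.

Lemma sfogd_state_snd_ge0 (D gamma : R) (u : nat -> R) (eps1 : R) (n : nat) :
  0 <= snd (sfogd_state D gamma u eps1 n).
Proof.
  induction n as [| n IH]; simpl; [lra |].
  destruct (sfogd_state D gamma u eps1 n) as [e s]. simpl in *.
  pose proof (pow2_ge_0 (grad D (u (S n)) e)). lra.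
Qed.

Lemma sfogd_state_fst_bounded (D gamma : R) (j : nat) (u : nat -> R) (eps1 : R) :
  0 < D -> 0 < gamma -> gamma < 2 - D ->
  (forall t : nat, (1 <= t <= j)%nat -> 0 <= u t <= 1) ->
  - D - gamma <= eps1 <= D + gamma ->
  forall n : nat, (n < j)%nat ->
    - D - gamma <= fst (sfogd_state D gamma u eps1 n) <= D + gamma.
Proof.
  intros hD hg hg2 hu he n. induction n as [| n IH]; intro hn; simpl; [lra |].
  pose proof (sfogd_state_snd_ge0 D gamma u eps1 n) as hs.
  specialize (IH ltac:(lia)).
  destruct (sfogd_state D gamma u eps1 n) as [e s]. simpl in *.
  apply sfogd_update_bounded; auto. apply hu. lia.
Qed.

Theorem lemma1 (D gamma : R) (j : nat) (u : nat -> R) (eps1 : R) :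
  0 < D -> D < 2 -> 0 < gamma -> gamma < 2 - D ->
  (forall t : nat, (1 <= t <= j)%nat -> 0 <= u t <= 1) ->
  - D - gamma <= eps1 <= D + gamma ->
  forall tau : nat, (1 <= tau <= j)%nat ->
    - D - gamma <= sfogd_eps D gamma u eps1 tau <= D + gamma.
Proof.
  intros hD _ hg hg2 hu he tau htau.
  apply (sfogd_state_fst_bounded D gamma j); auto. lia.
Qed.
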